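(* For the discrete-time Glauber dynamics for the ferromagnetic Ising model (with zero external field) on any finite graph with nonnegative interaction strengths, $t_{\mathrm{mix}}^+\ \ge\ \log 2\cdot(\mathtt{gap}^{-1}-1)$.
   Context: Let $G=(V,E)$ be a finite graph and $J=\{J_{uv}\ge0:uv\in E\}$. The Ising measure on $\{\pm1\}^V$ is $\mu(\sigma)=Z^{-1}\exp(\sum_{uv\in E}J_{uv}\sigma(u)\sigma(v))$. Glauber dynamics: at each step pick a uniform vertex $v$ and resample $\sigma(v)$ from its conditional law under $\mu$ given all other spins. $\mathtt{gap}=1-\lambda$, where $\lambda$ is the second largest eigenvalue of the transition kernel. $t_{\mathrm{mix}}^+=\min\{t:\|\mathbb P_+(X_t\in\cdot)-\mu\|_{TV}\le1/4\}$, where $\mathbb P_+$ refers to the chain started at the all-plus configuration and $\|\cdot\|_{TV}$ is total variation distance. *)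

From HB Require Import structures.
From mathcomp Require Import all_boot all_order all_algebra.
From mathcomp Require Import reals.
From mathcomp Require Import sequences exp.
From mathcomp Require polyrcf.

Set Implicit Arguments.
Unset Strict Implicit.
Unset Printing Implicit Defensive.

Import Order.TTheory GRing.Theory Num.Theory.
Local Open Scope ring_scope.

Section Ising.
Variables (R : realType) (V : finType).

Definition simple_graph (e : rel V) : Prop :=
  (forall u v, e u v = e v u) /\ (forall v, ~~ e v v).

(* Configurations sigma : {+1,-1}^V, encoded with true = +1, false = -1. *)
Definition config := {ffun V -> bool}.
Definition spin (b : bool) : R := if b then 1 else -1.
Definition all_plus : config := [ffun=> true].

(* sum_{uv in E} J_uv sigma(u) sigma(v): each undirected edge once
   (sum over ordered pairs, halved; J is symmetric). *)
Definition ising_energy (e : rel V) (J : V -> V -> R) (s : config) : R :=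
  (\sum_(u : V) \sum_(v : V | e u v) J u v * spin (s u) * spin (s v)) / 2.

Definition ising_Z e J : R := \sum_(s : config) expR (ising_energy e J s).

Definition ising_mu e J (s : config) : R := expR (ising_energy e J s) / ising_Z e J.

Definition agree_off (v : V) (s t : config) : bool :=
  [forall u, (u != v) ==> (s u == t u)].

Definition cond_law e J (v : V) (s t : config) : R :=
  if agree_off v s t then
    ising_mu e J t / (\sum_(t' : config | agree_off v s t') ising_mu e J t')
  else 0.

Definition glauber e J (s t : config) : R :=
  (#|V|%:R)^-1 * \sum_(v : V) cond_law e J v s t.

Definition glauber_mx e J : 'M[R]_#|{: config}| :=
  \matrix_(i, j) glauber e J (enum_val i) (enum_val j).

(* Eigenvalues of a square matrix counted with algebraic multiplicity
   (the real ones), in nonincreasing order. *)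
Definition eigenvalues_desc n (A : 'M[R]_n) : seq R :=
  let p := char_poly A in
  sort (fun x y => y <= x)
    (flatten [seq nseq (mup x p) x | x <- polyrcf.rootsR p]).

Definition lambda2 n (A : 'M[R]_n) : R := nth 0 (eigenvalues_desc A) 1.

Definition glauber_gap e J : R := 1 - lambda2 (glauber_mx e J).

Definition glauber_law e J (t : nat) : config -> R :=
  iter t (fun d (y : config) => \sum_(x : config) d x * glauber e J x y)
    (fun y => if y == all_plus then 1 else 0).

Definition tv_dist (p q : config -> R) : R :=
  (\sum_(x : config) `|p x - q x|) / 2.

Definition mixed_plus e J (t : nat) : Prop :=
  tv_dist (glauber_law e J t) (ising_mu e J) <= 4^-1.

Definition is_tmix_plus e J (t : nat) : Prop :=
  mixed_plus e J t /\ (forall s, (s < t)%N -> ~ mixed_plus e J s).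

End Ising.

From HB Require Import structures.
From mathcomp Require Import all_boot all_order all_algebra.
From mathcomp Require Import reals.
From mathcomp Require Import sequences exp.
From mathcomp Require polyrcf.
From mathcomp Require Import ring lra.
Import Order.TTheory GRing.Theory Num.Theory.
Local Open Scope ring_scope.

Set Implicit Arguments.
Unset Strict Implicit.
Unset Printing Implicit Defensive.

(* Heat-bath dynamics of a ferromagnet is monotone: the kernel P maps
   coordinatewise increasing functions to increasing ones.  By spin-flip
   symmetry P^t g(-) is the expectation of g o flip from the all-plus start,
   so when d_+(t) <= 1/4 the oscillation g(+) - g(-) of an increasing g is at
   least halved by P^t.  Let w be a left eigenvector of P for an eigenvalue
   lam in (0,1); then w sums to 0, and for z maximal in its support the
   indicator h of the up-set of z has <w, h> = w(z) <> 0.  Hence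
   lam^(kt) |w(z)| = |<w, P^(kt) h>| <= |w|_1 2^-k for all k, forcing
   lam^t <= 1/2, i.e. t >= log 2 / (-log lam) >= log 2 * lam / (1 - lam). *)

(* [cu] stands for [u == v]: the left side is the gain of the u-w bond term
   when the spin at v is raised. *)
Lemma spin_upd_mono (R : realType) (cu cw a b a' b' : bool) :
  a ==> a' -> b ==> b' ->
  spin R (if cu then true else a) * spin R (if cw then true else b)
  - spin R (if cu then false else a) * spin R (if cw then false else b) <=
  spin R (if cu then true else a') * spin R (if cw then true else b')
  - spin R (if cu then false else a') * spin R (if cw then false else b').
Proof.
by case: cu cw a b a' b' => [] [] [] [] [] [] //= _ _; rewrite /spin; lra.
Qed.

Lemma mean2_le (R : realFieldType) (a b a' b' G H G' H' : R) :
  0 < a -> 0 < b -> 0 < a' -> 0 < b' -> a * b' <= a' * b ->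
  H <= G -> G <= G' -> H <= H' -> H' <= G' ->
  (a * G + b * H) / (a + b) <= (a' * G' + b' * H') / (a' + b').
Proof.
move=> ha hb ha' hb' hab hGH hG hH hGH'.
rewrite ler_pdivrMr ?addr_gt0 // mulrAC ler_pdivlMr ?addr_gt0 //.
have h1 : 0 <= a * (a' + b') * (G' - G) by rewrite !mulr_ge0 // ?subr_ge0; lra.
have h2 : 0 <= b * (a' + b') * (H' - H) by rewrite !mulr_ge0 // ?subr_ge0; lra.
have h3 : 0 <= (a' * b - a * b') * (G' - H') by rewrite mulr_ge0 // subr_ge0.
nra.
Qed.

Lemma bernoulli_ineq (R : realFieldType) (q : R) k :
  1 <= q -> 1 + k%:R * (q - 1) <= q ^+ k.
Proof.
move=> hq; elim: k => [|k IH]; first by rewrite mul0r addr0 expr0.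
rewrite exprS -natr1.
have hk : 0 <= k%:R :> R by apply: ler0n.
have : q * (1 + k%:R * (q - 1)) <= q * q ^+ k by apply: ler_wpM2l => //; lra.
have : 0 <= k%:R * (q - 1) * (q - 1) by rewrite !mulr_ge0 // subr_ge0.
nra.
Qed.

Lemma expr_bounded_le1 (R : archiRealFieldType) (q s C : R) :
  0 < s -> (forall k, q ^+ k * s <= C) -> q <= 1.
Proof.
move=> hs hb; rewrite leNgt; apply/negP => hq.
have hC : 0 <= C by apply: le_trans (hb 0%N); rewrite expr0 mul1r ltW.
have hsq : 0 < s * (q - 1) by rewrite mulr_gt0 // subr_gt0.
pose k := Num.Def.archi_bound (C / (s * (q - 1))).
have : C / (s * (q - 1)) < k%:R by rewrite archi_boundP // divr_ge0 // ltW.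
rewrite ltr_pdivrMr //.
have := bernoulli_ineq k (ltW hq); have := hb k.
have : 0 <= k%:R :> R by apply: ler0n.
nra.
Qed.

Lemma ln2_mul_relax_le (R : realType) (L : R) t :
  0 < L -> L < 1 -> L ^+ t <= 2^-1 -> ln 2 * ((1 - L)^-1 - 1) <= t%:R.
Proof.
move=> L0 L1 hLt.
have hln2 : ln 2 <= t%:R * - ln L.
  rewrite mulrN lerNr mulr_natl -lnXn // -lnV ?posrE //.
  by rewrite ler_ln ?posrE ?exprn_gt0 // invr_gt0.
have hlnL : - ln L <= L^-1 - 1.
  rewrite -lnV ?posrE // -{1}[L^-1](subrK 1) addrC le_ln1Dx //.
  by move: L0; rewrite -invr_gt0; lra.
have -> : (1 - L)^-1 - 1 = L / (1 - L).
  by field; rewrite lt0r_neq0 // subr_gt0.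
have hq : 0 <= L / (1 - L) by rewrite divr_ge0 ?subr_ge0 ?ltW.
have -> : t%:R = t%:R * (L^-1 - 1) * (L / (1 - L)).
  by field; rewrite !lt0r_neq0 ?subr_gt0.
apply: ler_wpM2r => //; apply: le_trans hln2 _.
by apply: ler_wpM2l => //; apply: ler0n.
Qed.

Lemma lambda2_root (R : realType) n (A : 'M[R]_n) :
  0 < lambda2 A -> root (char_poly A) (lambda2 A).
Proof.
rewrite /lambda2 /eigenvalues_desc.
set s := sort _ _.
case: (ltnP 1 (size s)) => hs; last by rewrite nth_default // ltxx.
move=> _; have := mem_nth 0 hs; rewrite mem_sort.
case/flattenP => l /mapP [x hx ->]; rewrite mem_nseq => /andP [_ /eqP ->].
by move: hx; apply: polyrcf.root_roots.
Qed.

Section Glauber.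
Variables (R : realType) (V : finType) (e : rel V) (J : V -> V -> R).
Hypothesis V_gt0 : (0 < #|V|)%N.
Hypothesis J_ge0 : forall u v, e u v -> 0 <= J u v.

Local Notation config := (config V).
Local Notation mu := (ising_mu e J).
Local Notation P := (glauber e J).

Definition upd (x : config) v b : config := [ffun u => if u == v then b else x u].
Definition flip (x : config) : config := [ffun u => ~~ x u].
Definition all_minus : config := flip (all_plus V).

Definition config_le (x y : config) : bool := [forall u, x u ==> y u].
Definition config_incr (g : config -> R) : Prop := forall x y, config_le x y -> g x <= g y.

Definition glauber_op (g : config -> R) (x : config) : R := \sum_y P x y * g y.

Definition heat_bath_mean (g : config -> R) (x : config) v : R :=
  (mu (upd x v true) * g (upd x v true) + mu (upd x v false) * g (upd x v false))
  / (mu (upd x v true) + mu (upd x v false)).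

Lemma ising_Z_gt0 : 0 < ising_Z e J.
Proof.
rewrite /ising_Z (bigD1 (all_plus V)) //= ltr_pwDl ?expR_gt0 //.
by rewrite sumr_ge0 // => s _; rewrite expR_ge0.
Qed.

Lemma ising_mu_gt0 s : 0 < mu s.
Proof. by rewrite /ising_mu divr_gt0 ?expR_gt0 ?ising_Z_gt0. Qed.

Lemma ising_mu_sum1 : \sum_y mu y = 1.
Proof. by rewrite /ising_mu -mulr_suml divff // gt_eqF // ising_Z_gt0. Qed.

Lemma agree_offE v x y :
  agree_off v x y = (y == upd x v true) || (y == upd x v false).
Proof.
apply/idP/idP => [/forallP agr | /orP[]/eqP ->]; last 2 first.
- by apply/forallP => u; apply/implyP => /negbTE uv; rewrite ffunE uv.
- by apply/forallP => u; apply/implyP => /negbTE uv; rewrite ffunE uv.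
have yE : y = upd x v (y v).
  apply/ffunP => u; rewrite ffunE; case: eqP => [-> // | /eqP uv].
  by have /implyP/(_ uv)/eqP := agr u.
by rewrite [in y == _]yE [in y == upd _ _ false]yE; case: (y v); rewrite eqxx ?orbT.
Qed.

Lemma sum_agree_off v x (F : config -> R) :
  \sum_(t | agree_off v x t) F t = F (upd x v true) + F (upd x v false).
Proof.
have neq : upd x v false != upd x v true.
  by apply/eqP => /ffunP /(_ v); rewrite !ffunE eqxx.
rewrite (eq_bigl (fun t => (t == upd x v true) || (t == upd x v false)));
  last exact: agree_offE.
rewrite (bigD1 (upd x v true)) ?eqxx //=.
rewrite (bigD1 (upd x v false)) /= ?eqxx ?orbT ?neq // big1 ?addr0 //.
by move=> t /andP[/andP[/orP[]-> ]]; rewrite ?andbF.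
Qed.

Lemma cond_law_mean v x (g : config -> R) :
  \sum_t cond_law e J v x t * g t = heat_bath_mean g x v.
Proof.
rewrite (eq_bigr (fun t => if agree_off v x t then
   mu t / (\sum_(t' | agree_off v x t') mu t') * g t else 0)); last first.
  by move=> t _; rewrite /cond_law; case: ifP; rewrite ?mul0r.
rewrite -big_mkcond /= !sum_agree_off /heat_bath_mean.
by ring.
Qed.

Lemma glauber_opE g x :
  glauber_op g x = (#|V|%:R)^-1 * \sum_v heat_bath_mean g x v.
Proof.
rewrite /glauber_op /glauber.
under eq_bigr => y _ do rewrite -mulrA mulr_suml.
rewrite -mulr_sumr exchange_big /=; congr (_ * _).
by apply: eq_bigr => v _; rewrite cond_law_mean.
Qed.

Lemma glauber_op_cst c x : glauber_op (fun=> c) x = c.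
Proof.
rewrite glauber_opE.
under eq_bigr => v _ do
  rewrite /heat_bath_mean -mulrDl mulrAC divff ?mul1r ?gt_eqF ?addr_gt0 ?ising_mu_gt0 //.
by rewrite sumr_const -[c *+ _]mulr_natl mulrA mulVf ?mul1r // pnatr_eq0 -lt0n.
Qed.

Lemma config_le_refl x : config_le x x.
Proof. by apply/forallP => u; apply/implyP. Qed.

Lemma config_le_trans x y z : config_le x y -> config_le y z -> config_le x z.
Proof.
move=> /forallP xy /forallP yz; apply/forallP => u; apply/implyP => xu.
by move/implyP: (yz u); apply; move/implyP: (xy u); apply.
Qed.

Lemma config_le_upd x x' v b : config_le x x' -> config_le (upd x v b) (upd x' v b).
Proof.
move=> /forallP xx'; apply/forallP => u; rewrite !ffunE.
by case: eqP => // _; rewrite implybb.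
Qed.

Lemma config_le_upd_false x v : config_le (upd x v false) (upd x v true).
Proof. by apply/forallP => u; rewrite !ffunE; case: eqP => // _; rewrite implybb. Qed.

Lemma config_le_minus x : config_le all_minus x.
Proof. by apply/forallP => u; rewrite !ffunE. Qed.

Lemma config_le_plus x : config_le x (all_plus V).
Proof. by apply/forallP => u; rewrite !ffunE implybT. Qed.

(* The only use of ferromagnetism, J >= 0. *)
Lemma ising_energy_upd_mono v x x' : config_le x x' ->
  ising_energy e J (upd x v true) - ising_energy e J (upd x v false) <=
  ising_energy e J (upd x' v true) - ising_energy e J (upd x' v false).
Proof.
move/forallP => xx'.
rewrite /ising_energy -!mulrBl ler_pM2r ?invr_gt0 ?ltr0n //.
rewrite -!sumrB; apply: ler_sum => u _.
rewrite -!sumrB; apply: ler_sum => w euw.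
rewrite !ffunE -!mulrA -!mulrBr ler_wpM2l ?J_ge0 //.
exact: spin_upd_mono.
Qed.

Lemma ising_mu_upd_ratio_le v x x' : config_le x x' ->
  mu (upd x v true) * mu (upd x' v false) <= mu (upd x' v true) * mu (upd x v false).
Proof.
move=> /(ising_energy_upd_mono v) hE.
rewrite -ler_expR !expRB ler_pdivrMr ?expR_gt0 // mulrAC ler_pdivlMr ?expR_gt0 // in hE.
have Zi : 0 <= (ising_Z e J)^-1 by rewrite invr_ge0 ltW ?ising_Z_gt0.
by rewrite /ising_mu mulrACA [X in _ <= X]mulrACA ler_wpM2r ?mulr_ge0.
Qed.

Lemma glauber_op_incr g : config_incr g -> config_incr (glauber_op g).
Proof.
move=> g_incr x x' xx'; rewrite !glauber_opE ler_wpM2l ?invr_ge0 ?ler0n //.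
apply: ler_sum => v _; apply: mean2_le; rewrite ?ising_mu_gt0 ?g_incr //.
- exact: ising_mu_upd_ratio_le.
- exact: config_le_upd_false.
- exact: config_le_upd.
- exact: config_le_upd.
- exact: config_le_upd_false.
Qed.

Lemma iter_glauber_op_incr n g : config_incr g -> config_incr (iter n glauber_op g).
Proof. by elim: n => [|n IH] //= g_incr; apply/glauber_op_incr/IH. Qed.

Lemma flipK : involutive flip.
Proof. by move=> x; apply/ffunP => u; rewrite !ffunE negbK. Qed.

Lemma ising_energy_flip x : ising_energy e J (flip x) = ising_energy e J x.
Proof.
rewrite /ising_energy; congr (_ / _); apply: eq_bigr => u _; apply: eq_bigr => w _.
by rewrite !ffunE; case: (x u); case: (x w); rewrite /spin /=; ring.
Qed.

Lemma ising_mu_flip x : mu (flip x) = mu x.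
Proof. by rewrite /ising_mu ising_energy_flip. Qed.

Lemma agree_off_flip v x y : agree_off v (flip x) (flip y) = agree_off v x y.
Proof. by apply: eq_forallb => u; rewrite !ffunE; case: (x u); case: (y u). Qed.

Lemma glauber_flip x y : P (flip x) (flip y) = P x y.
Proof.
rewrite /glauber; congr (_ * _); apply: eq_bigr => v _.
rewrite /cond_law agree_off_flip ising_mu_flip; case: ifP => // _; congr (_ / _).
rewrite (reindex_inj (inv_inj flipK)) /=.
by apply: eq_big => t; rewrite ?agree_off_flip ?ising_mu_flip.
Qed.

Lemma eq_glauber_op g g' : g =1 g' -> glauber_op g =1 glauber_op g'.
Proof. by move=> gg' x; apply: eq_bigr => y _; rewrite gg'. Qed.

Lemma glauber_op_flip g x : glauber_op (g \o flip) x = glauber_op g (flip x).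
Proof.
rewrite /glauber_op [RHS](reindex_inj (inv_inj flipK)) /=.
by apply: eq_bigr => y _; rewrite glauber_flip.
Qed.

Lemma iter_glauber_op_flip n g x :
  iter n glauber_op (g \o flip) x = iter n glauber_op g (flip x).
Proof.
elim: n x => [|n IH] x //=.
by rewrite (@eq_glauber_op _ (iter n glauber_op g \o flip)) ?glauber_op_flip.
Qed.

Lemma iter_glauber_op_cst n c x : iter n glauber_op (fun=> c) x = c.
Proof.
elim: n x => [|n IH] x //=.
by rewrite (@eq_glauber_op _ (fun=> c)) ?glauber_op_cst.
Qed.

Lemma glauber_law_mean t g :
  \sum_y glauber_law e J t y * g y = iter t glauber_op g (all_plus V).
Proof.
elim: t g => [|t IH] g.
  rewrite /glauber_law /= (bigD1 (all_plus V)) //= eqxx mul1r big1 ?addr0 //.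
  by move=> y /negbTE ->; rewrite mul0r.
rewrite iterSr -IH /=.
under eq_bigr do rewrite mulr_suml.
rewrite exchange_big /=; apply: eq_bigr => x _.
by rewrite /glauber_op mulr_sumr; apply: eq_bigr => y _; rewrite mulrA.
Qed.

Lemma glauber_law_sum1 t : \sum_y glauber_law e J t y = 1.
Proof.
rewrite -[RHS](iter_glauber_op_cst t 1 (all_plus V)) -glauber_law_mean.
by apply: eq_bigr => y _; rewrite mulr1.
Qed.

Lemma tv_mean_bound (p q f : config -> R) (a b : R) :
  \sum_x p x = \sum_x q x -> (forall x, a <= f x <= b) ->
  `|\sum_x p x * f x - \sum_x q x * f x| <= tv_dist p q * (b - a).
Proof.
move=> pq f_ab; set m := (a + b) / 2.
have -> : \sum_x p x * f x - \sum_x q x * f x = \sum_x (p x - q x) * (f x - m).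
  have -> : \sum_x (p x - q x) * (f x - m) =
      \sum_x (p x * f x - q x * f x) - m * (\sum_x p x - \sum_x q x).
    by rewrite -sumrB mulr_sumr -sumrB; apply: eq_bigr => x _; ring.
  by rewrite pq subrr mulr0 subr0 sumrB.
apply: le_trans (ler_norm_sum _ _ _) _.
rewrite /tv_dist -mulrA mulr_suml; apply: ler_sum => x _.
rewrite normrM ler_wpM2l //; have /andP[fa fb] := f_ab x.
by rewrite ler_norml; apply/andP; split; rewrite /m; lra.
Qed.

Definition osc (g : config -> R) : R := g (all_plus V) - g all_minus.

(* The start from all-minus is the flip of the start from all-plus, and mu is
   flip invariant, so both expectations are within d_+(t) * osc g of the
   mean of g under mu. *)
Lemma osc_iter_half t g : mixed_plus e J t -> config_incr g ->
  osc (iter t glauber_op g) <= osc g / 2.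
Proof.
rewrite /mixed_plus => mixed g_incr.
have g_bnd x : g all_minus <= g x <= g (all_plus V).
  by rewrite !g_incr ?config_le_minus ?config_le_plus.
have sum_eq : \sum_x glauber_law e J t x = \sum_x mu x.
  by rewrite glauber_law_sum1 ising_mu_sum1.
have plus_bnd := tv_mean_bound sum_eq g_bnd.
have minus_bnd := tv_mean_bound sum_eq (fun x => g_bnd (flip x)).
have mu_flip : \sum_x mu x * g (flip x) = \sum_x mu x * g x.
  rewrite [RHS](reindex_inj (inv_inj flipK)) /=.
  by apply: eq_bigr => x _; rewrite ising_mu_flip.
rewrite mu_flip in minus_bnd.
rewrite /osc -glauber_law_mean /all_minus -iter_glauber_op_flip -glauber_law_mean.
have D_ge0 : 0 <= tv_dist (glauber_law e J t) mu.
  by rewrite /tv_dist divr_ge0 // sumr_ge0.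
have W_ge0 : 0 <= g (all_plus V) - g all_minus.
  by rewrite subr_ge0 g_incr ?config_le_minus.
move: plus_bnd minus_bnd mixed; rewrite !ler_norml /=.
set D := tv_dist _ _; set W := g (all_plus V) - g all_minus.
move=> /andP[? ?] /andP[? ?] D_le.
have : D * W <= 4^-1 * W by apply: ler_wpM2r.
nra.
Qed.

Lemma osc_iter_geometric t g : mixed_plus e J t -> config_incr g ->
  forall k, osc (iter (k * t) glauber_op g) <= (2^-1) ^+ k * osc g.
Proof.
move=> mixed g_incr; elim => [|k IH]; first by rewrite mul0n expr0 mul1r.
rewrite mulSn iterD; apply: le_trans (osc_iter_half mixed (iter_glauber_op_incr _ g_incr)) _.
by rewrite exprSr mulrAC ler_wpM2r ?invr_ge0.
Qed.

Lemma glauber_left_eigen lam : root (char_poly (glauber_mx e J)) lam ->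
  exists2 w : config -> R, [exists x, w x != 0] &
    forall y, \sum_x w x * P x y = lam * w y.
Proof.
rewrite -eigenvalue_root_char => /eigenvalueP [v hv v_neq0].
exists (fun x => v 0 (enum_rank x)).
  apply: contraNT v_neq0 => /existsPn w0.
  apply/eqP/rowP => j; rewrite mxE.
  by move: (w0 (enum_val j)); rewrite enum_valK negbK => /eqP.
move=> y; move/rowP: hv => /(_ (enum_rank y)); rewrite !mxE => <-.
rewrite [RHS](reindex enum_rank) /=; last exact/onW_bij/enum_rank_bij.
by apply: eq_bigr => x _; rewrite mxE !enum_rankK.
Qed.

Section LeftEigenvector.
Variables (lam : R) (w : config -> R).
Hypothesis w_eigen : forall y, \sum_x w x * P x y = lam * w y.

Lemma eigen_glauber_op g : \sum_x w x * glauber_op g x = lam * \sum_x w x * g x.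
Proof.
under eq_bigr do rewrite /glauber_op mulr_sumr.
rewrite exchange_big /= mulr_sumr; apply: eq_bigr => y _.
by rewrite mulrA -w_eigen mulr_suml; apply: eq_bigr => x _; rewrite mulrA.
Qed.

Lemma eigen_iter_glauber_op n g :
  \sum_x w x * iter n glauber_op g x = lam ^+ n * \sum_x w x * g x.
Proof.
elim: n => [|n IH]; first by rewrite expr0 mul1r.
by rewrite iterS eigen_glauber_op IH exprS mulrA.
Qed.

Lemma eigen_sum0 : lam != 1 -> \sum_x w x = 0.
Proof.
move=> lam_neq1; have := eigen_glauber_op (fun=> 1).
under eq_bigr do rewrite glauber_op_cst mulr1.
under [X in _ = _ * X]eq_bigr do rewrite mulr1.
move/eqP; rewrite -subr_eq0 -{1}[\sum_x w x]mul1r -mulrBl mulf_eq0.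
by rewrite subr_eq0 eq_sym (negbTE lam_neq1) => /eqP.
Qed.

End LeftEigenvector.

(* Only differences g x - g all_minus enter once w sums to 0, and for
   increasing g these lie in [0, osc g]. *)
Lemma zero_sum_mean_le_osc (w : config -> R) g : \sum_x w x = 0 -> config_incr g ->
  `|\sum_x w x * g x| <= (\sum_x `|w x|) * osc g.
Proof.
move=> w_sum0 g_incr.
have <- : \sum_x w x * (g x - g all_minus) = \sum_x w x * g x.
  under eq_bigr do rewrite mulrBr.
  by rewrite sumrB -mulr_suml w_sum0 mul0r subr0.
apply: le_trans (ler_norm_sum _ _ _) _; rewrite mulr_suml.
apply: ler_sum => x _; rewrite normrM ler_wpM2l // ger0_norm.
  by rewrite lerD2r g_incr ?config_le_plus.
by rewrite subr_ge0 g_incr ?config_le_minus.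
Qed.

Lemma exists_maximal_support (w : config -> R) : [exists x, w x != 0] ->
  exists2 z, w z != 0 & forall y, config_le z y -> y != z -> w y = 0.
Proof.
case/existsP => x0 wx0.
have [z wz z_max] := @arg_maxnP _ x0 (fun y => w y != 0)
  (fun y : config => #|[set u | y u]|) wx0.
exists z => // y zy y_neq_z; apply/eqP/negPn/negP => wy.
have := z_max y wy; apply/negP; rewrite -ltnNge; apply: proper_card.
rewrite properEneq; apply/andP; split.
  apply: contraNneq y_neq_z => /setP zy_eq; apply/eqP/ffunP => u.
  by move: (zy_eq u); rewrite !inE => ->.
by apply/subsetP => u; rewrite !inE; move/forallP: zy => /(_ u) /implyP.
Qed.

Definition up_indicator (z y : config) : R := if config_le z y then 1 else 0.

Lemma up_indicator_incr z : config_incr (up_indicator z).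
Proof.
move=> x y xy; rewrite /up_indicator; case: ifP => [zx|_].
  by rewrite (config_le_trans zx xy).
by case: ifP; rewrite ?ler01.
Qed.

Lemma eigenvalue_mix_bound t lam : mixed_plus e J t ->
  root (char_poly (glauber_mx e J)) lam -> 0 < lam < 1 -> lam ^+ t <= 2^-1.
Proof.
move=> mixed lam_root /andP[lam_gt0 lam_lt1].
have [w w_neq0 w_eigen] := glauber_left_eigen lam_root.
have w_sum0 := eigen_sum0 w_eigen (negbT (lt_eqF lam_lt1)).
have [z wz z_max] := exists_maximal_support w_neq0.
have wh : \sum_x w x * up_indicator z x = w z.
  rewrite (bigD1 z) //= /up_indicator config_le_refl mulr1 big1 ?addr0 //.
  by move=> y y_neq_z; case: ifP => [zy|_]; rewrite ?mulr0 // (z_max y) ?mul0r.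
have h_incr := up_indicator_incr z.
set C := (\sum_x `|w x|) * osc (up_indicator z).
suff : 2 * lam ^+ t <= 1 by lra.
apply: (@expr_bounded_le1 _ _ `|w z| C); first by rewrite normr_gt0.
move=> k; have decay : `|\sum_x w x * iter (k * t) glauber_op (up_indicator z) x|
    <= (2^-1) ^+ k * C.
  apply: le_trans (zero_sum_mean_le_osc w_sum0 (iter_glauber_op_incr _ h_incr)) _.
  by rewrite mulrCA ler_wpM2l ?sumr_ge0 ?osc_iter_geometric.
rewrite (eigen_iter_glauber_op w_eigen) wh normrM in decay.
rewrite (ger0_norm (exprn_ge0 _ (ltW lam_gt0))) in decay.
by rewrite exprVn ler_pdivlMl ?exprn_gt0 // mulnC exprM mulrA -exprMn in decay.
Qed.

End Glauber.

Theorem lemma2p1 (R : realType) (V : finType) (e : rel V) (J : V -> V -> R)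
    (hV : (0 < #|V|)%N) (he : simple_graph e)
    (hJsym : forall u v, J u v = J v u)
    (hJ : forall u v, e u v -> 0 <= J u v)
    (tmix : nat) (htmix : is_tmix_plus e J tmix) :
  ln 2 * ((glauber_gap e J)^-1 - 1) <= tmix%:R.
Proof.
rewrite /glauber_gap; set L := lambda2 _.
case: (boolP (0 < L < 1)) => [L_in | L_out].
  have /andP[L_gt0 L_lt1] := L_in; apply: ln2_mul_relax_le => //.
  by apply: (eigenvalue_mix_bound hV hJ (proj1 htmix)) => //; apply: lambda2_root.
(* Outside (0, 1) the left-hand side is nonpositive. *)
have gap_inv_le1 : (1 - L)^-1 <= 1.
  have [L_le0|L_gt0] := lerP L 0; first by rewrite invf_le1; lra.
  have L_ge1 : 1 <= L by move: L_out; rewrite L_gt0 /= -leNgt.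
  by apply: (le_trans _ ler01); rewrite invr_le0; lra.
rewrite (le_trans _ (ler0n _ tmix)) // mulr_ge0_le0 ?ln_ge0 ?ler1n ?subr_le0 //.
Qed.
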